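(* Consider a generalized Nash equilibrium problem (GNEP) with $N$ players in which player $\nu$ solves $\min_{x^\nu}\theta_\nu(x)$ subject to $c^\nu(x)\le 0$, where $\theta_\nu:\mathbb{R}^n\to\mathbb{R}$ and $c^\nu:\mathbb{R}^n\to\mathbb{R}^{r_\nu}$ are continuously differentiable. Let $(x^k)\subset\mathbb{R}^n$ be a sequence converging to $\bar x$ and, for each $\nu$, let $(\lambda^{\nu,k})\subset\mathbb{R}^{r_\nu}$ be vectors with $$\nabla_{x^\nu}\theta_\nu(x^k)+\nabla_{x^\nu}c^\nu(x^k)\lambda^{\nu,k}\to 0\quad\text{and}\quad \min\{-c^\nu(x^k),\lambda^{\nu,k}\}\to0$$ for every $\nu$. If GNEP-CPLD holds in $\bar x$, then there is a multiplier $\bar\lambda$ such that $(\bar x,\bar\lambda)$ is a KKT point of the GNEP.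
   Context: Variables: $x=(x^1,\ldots,x^N)\in\mathbb{R}^n$, $x^\nu\in\mathbb{R}^{n_\nu}$, $r=r_1+\cdots+r_N$; $\nabla f$ is the transposed Jacobian and $\nabla_{x^\nu}f$ its submatrix for the components $x^\nu$; $\min$ of vectors is componentwise. A pair $(x,\lambda)\in\mathbb{R}^{n+r}$, $\lambda=(\lambda^1,\ldots,\lambda^N)$, $\lambda^\nu\in\mathbb{R}^{r_\nu}$, is a KKT point of the GNEP if for every $\nu$: $\nabla_{x^\nu}\theta_\nu(x)+\nabla_{x^\nu}c^\nu(x)\lambda^\nu=0$ and $\min\{-c^\nu(x),\lambda^\nu\}=0$. Vectors $v_1,\dots,v_k$ are positively linearly dependent if $\sum_i\lambda_iv_i=0$ has a nontrivial solution with all $\lambda_i\ge0$. CPLD$_\nu$ at a point $x$ with $c^\nu(x)\le0$: whenever $\nabla_{x^\nu}c_i^\nu(x)$, $i\in I$, are positively linearly dependent for some $I\subset\{i:c_i^\nu(x)=0\}$, the partial gradients $\nabla_{x^\nu}c_i^\nu(y)$, $i\in I$, are linearly dependent for all $y$ in a neighbourhood of $x$. GNEP-CPLD holds at $x$ if $c^\nu(x)\le 0$ and CPLD$_\nu$ holds at $x$ for every $\nu$. *)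

From HB Require Import structures.
From mathcomp Require Import all_boot all_order all_algebra.
From mathcomp Require Import all_classical all_reals all_analysis.
Set Implicit Arguments. Unset Strict Implicit. Unset Printing Implicit Defensive.
Import Order.TTheory GRing.Theory Num.Theory.
Import numFieldNormedType.Exports.
Local Open Scope ring_scope.
Local Open Scope classical_set_scope.

(* Points of R^n are row vectors 'rV[R]_n.  The decision variables of
   player nu are the coordinates j with owner j = nu. *)

(* continuously differentiable f : R^n -> R: Fréchet differentiable
   everywhere, with derivative depending continuously on the point
   (in finite dimension: x |-> 'd f x v continuous for every v). *)
Definition C1 (R : realType) (n : nat) (f : 'rV[R]_n -> R) : Prop :=
  (forall x, differentiable f x) /\
  (forall v : 'rV[R]_n, continuous (fun x => 'd f x v)).

Definition pderiv (R : realType) (n : nat) (f : 'rV[R]_n -> R)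
  (x : 'rV[R]_n) (j : 'I_n) : R := 'd f x (delta_mx 0 j).

Definition pos_lin_dep (R : realType) (n r : nat) (I : {set 'I_r})
  (v : 'I_r -> 'I_n -> R) (J : 'I_n -> bool) : Prop :=
  exists a : 'I_r -> R,
    (forall i, i \in I -> 0 <= a i) /\
    (exists i, i \in I /\ a i != 0) /\
    (forall j, J j -> \sum_(i in I) a i * v i j = 0).

Definition lin_dep (R : realType) (n r : nat) (I : {set 'I_r})
  (v : 'I_r -> 'I_n -> R) (J : 'I_n -> bool) : Prop :=
  exists a : 'I_r -> R,
    (exists i, i \in I /\ a i != 0) /\
    (forall j, J j -> \sum_(i in I) a i * v i j = 0).

Definition CPLD_player (R : realType) (n r : nat) (J : 'I_n -> bool)
  (c : 'I_r -> 'rV[R]_n -> R) (x : 'rV[R]_n) : Prop :=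
  forall I : {set 'I_r},
    (forall i, i \in I -> c i x = 0) ->
    pos_lin_dep I (fun i => pderiv (c i) x) J ->
    \forall y \near x, lin_dep I (fun i => pderiv (c i) y) J.

Definition GNEP_CPLD (R : realType) (n N : nat) (owner : 'I_n -> 'I_N)
  (r : 'I_N -> nat) (c : forall nu : 'I_N, 'I_(r nu) -> 'rV[R]_n -> R)
  (x : 'rV[R]_n) : Prop :=
  forall nu : 'I_N,
    (forall i, c nu i x <= 0) /\
    CPLD_player (fun j => owner j == nu) (c nu) x.

Definition KKT_point (R : realType) (n N : nat) (owner : 'I_n -> 'I_N)
  (r : 'I_N -> nat) (theta : 'I_N -> 'rV[R]_n -> R)
  (c : forall nu : 'I_N, 'I_(r nu) -> 'rV[R]_n -> R)
  (x : 'rV[R]_n) (lam : forall nu : 'I_N, 'I_(r nu) -> R) : Prop :=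
  forall nu : 'I_N,
    (forall j, owner j = nu ->
       pderiv (theta nu) x j + \sum_(i < r nu) lam nu i * pderiv (c nu i) x j = 0) /\
    (forall i, Num.min (- c nu i x) (lam nu i) = 0).

(* For a single player, the complementarity residual forces the multipliers
   of the constraints inactive at xbar, and the negative parts of the others,
   to vanish in the limit, so they can be dropped from the Lagrangian
   residual.  A Caratheodory argument rewrites the remaining nonnegative
   combination at each x^k over linearly independent gradients; along an
   ultrafilter refining the cofinite filter (which replaces the extraction of
   convergent subsequences) the index set is eventually a constant I.
   Dividing by 1 + sum of the multipliers gives bounded weights whose limits
   (b, a) satisfy b + sum a = 1 and b grad theta + sum_I a grad c = 0 at xbar.
   If b = 0, the gradients indexed by I are positively linearly dependent at
   xbar, hence by CPLD linearly dependent at x^k for k large, against their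
   choice.  So b > 0 and a / b is a KKT multiplier. *)

From HB Require Import structures.
From mathcomp Require Import all_boot all_order all_algebra.
From mathcomp Require Import all_classical all_reals all_analysis.
From mathcomp Require Import lra.
Import Order.TTheory GRing.Theory Num.Theory.
Import numFieldNormedType.Exports.
Set Implicit Arguments. Unset Strict Implicit. Unset Printing Implicit Defensive.
Local Open Scope ring_scope.
Local Open Scope classical_set_scope.

Section Caratheodory.
Variables (R : realType) (n m : nat) (J : 'I_n -> bool) (v : 'I_m -> 'I_n -> R).

Lemma lin_dep_pos_witness (I : {set 'I_m}) : lin_dep I v J ->
  exists b : 'I_m -> R,
    [/\ forall i, i \notin I -> b i = 0, exists2 i, i \in I & 0 < b i
      & forall j, J j -> \sum_i b i * v i j = 0].
Proof.
move=> [a [[i0 [i0I a0]] a_comb]].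
exists (fun i => if i \in I then a i / a i0 else 0); split.
- by move=> i /negbTE ->.
- by exists i0; rewrite // i0I divff.
move=> j Jj; transitivity ((\sum_(i in I) a i * v i j) / a i0);
  last by rewrite a_comb // mul0r.
rewrite mulr_suml [RHS]big_mkcond; apply: eq_bigr => i _.
by case: ifP; rewrite ?mul0r // mulrAC.
Qed.

Lemma caratheodory_step (I : {set 'I_m}) (mu b : 'I_m -> R) :
  (forall i, 0 <= mu i) -> (forall i, i \notin I -> mu i = 0) ->
  (forall i, i \notin I -> b i = 0) -> (exists2 i, i \in I & 0 < b i) ->
  (forall j, J j -> \sum_i b i * v i j = 0) ->
  exists2 i0, i0 \in I & exists mu' : 'I_m -> R,
    [/\ forall i, 0 <= mu' i, forall i, i \notin I :\ i0 -> mu' i = 0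
      & forall j, J j -> \sum_i mu' i * v i j = \sum_i mu i * v i j].
Proof.
move=> mu_ge0 mu_supp b_supp [i1 i1I b_i1] b_comb.
pose P i := (i \in I) && (0 < b i).
have Pi1 : P i1 by rewrite /P i1I b_i1.
(* the largest step s with mu - s b >= 0; it kills the coordinate i0 *)
case: (arg_minP (fun i => mu i / b i) Pi1) => i0 /andP[i0I b_i0] i0_min.
pose s := mu i0 / b i0.
exists i0 => //; exists (fun i => mu i - s * b i); split.
- move=> i; rewrite subr_ge0.
  have [Pi|nPi] := boolP (P i).
    by have /andP[_ b_i] := Pi; rewrite -ler_pdivlMr //; exact: i0_min.
  have [iI|niI] := boolP (i \in I); last by rewrite b_supp // mulr0.
  move: nPi; rewrite /P iI -leNgt => b_le0.
  by rewrite (le_trans _ (mu_ge0 i)) // mulr_ge0_le0 // divr_ge0 // ltW.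
- move=> i; rewrite !inE negb_and negbK => /orP[/eqP ->|niI].
    by rewrite /s divfK ?subrr // gt_eqF.
  by rewrite mu_supp // b_supp // mulr0 subrr.
move=> j Jj; under eq_bigr => i _ do rewrite mulrBl -mulrA.
by rewrite sumrB -mulr_sumr b_comb // mulr0 subr0.
Qed.

Lemma caratheodory_reduction (I : {set 'I_m}) (mu : 'I_m -> R) :
  (forall i, 0 <= mu i) -> (forall i, i \notin I -> mu i = 0) ->
  exists I' : {set 'I_m}, exists mu' : 'I_m -> R,
    [/\ I' \subset I, forall i, 0 <= mu' i, forall i, i \notin I' -> mu' i = 0,
        forall j, J j -> \sum_i mu' i * v i j = \sum_i mu i * v i j
      & ~ lin_dep I' v J].
Proof.
have [k] := ubnP #|I|; elim: k => // k IH in I mu *.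
move=> I_lt mu_ge0 mu_supp.
have [/lin_dep_pos_witness[b [b_supp b_pos b_comb]]|indep] := pselect (lin_dep I v J);
  last by exists I, mu.
have [i0 i0I [mu1 [mu1_ge0 mu1_supp mu1_comb]]] :=
  caratheodory_step mu_ge0 mu_supp b_supp b_pos b_comb.
have I1_lt : (#|I :\ i0| < k)%N by move: I_lt; rewrite (cardsD1 i0 I) i0I.
have [I' [mu' [sub_I' mu'_ge0 mu'_supp mu'_comb indep']]] :=
  IH _ mu1 I1_lt mu1_ge0 mu1_supp.
exists I', mu'; split => //.
- exact: fintype.subset_trans sub_I' (subD1set _ _).
- by move=> j Jj; rewrite mu'_comb // mu1_comb.
Qed.

End Caratheodory.

Section UltraFilterLimits.
Context {T : Type} {F : set_system T} {FU : UltraFilter F}.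

Lemma fmap_ultra_filter (U : Type) (f : T -> U) : UltraFilter (f @ F).
Proof.
split=> [|G GF sFG]; first exact: fmap_proper_filter.
rewrite predeqE => A; split=> [GA|]; last exact: sFG.
have [//|FnA] := in_ultra_setVsetC (f @^-1` A) FU.
have /filter_ex[x [Ax nAx]] : G (A `&` ~` A) by apply: filterI => //; exact: sFG.
by case: (nAx Ax).
Qed.

Lemma ultra_cvg_bounded (R : realType) (f : T -> R) (a b : R) :
  (forall t, a <= f t <= b) -> exists l : R, f @ F --> l.
Proof.
move=> f_ab; have := @segment_compact R a b; rewrite compact_ultra.
case/(_ (f @ F) (fmap_ultra_filter f)) => [|l [_ f_l]]; last by exists l.
suff : F (f @^-1` `[a, b]) by [].
by apply: filterE => t; rewrite /= in_itv /= f_ab.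
Qed.

Lemma ultra_near_const (X : finType) (g : T -> X) :
  exists x, \forall t \near F, g t = x.
Proof.
suff : forall s : seq X, F [set t | g t \in s] -> exists x, F [set t | g t = x].
  by move/(_ (enum X)); apply; apply: filterE => t; rewrite /= mem_enum.
elim=> [|x s IH] Fs; first by have /filter_ex[] := Fs.
have [|Fnx] := in_ultra_setVsetC [set t | g t = x] FU; first by exists x.
apply: IH; apply: filterS (filterI Fs Fnx) => t [] /=.
by rewrite in_cons => /orP[/eqP|].
Qed.

End UltraFilterLimits.

Lemma norm_negpart_le_min (R : realDomainType) (a l : R) :
  `|Num.max l 0 - l| <= `|Num.min a l|.
Proof.
have [_|l_lt0] := leP 0 l; first by rewrite subrr normr0.
have min_le_l : Num.min a l <= l by rewrite ge_min lexx orbT.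
by rewrite sub0r normrN !ltr0_norm ?lerN2 // (le_lt_trans min_le_l).
Qed.

Lemma min_opp_eq0 (R : realDomainType) (x y : R) :
  x <= 0 -> 0 <= y -> x * y = 0 -> Num.min (- x) y = 0.
Proof.
move=> x_le0 y_ge0 /eqP; rewrite mulf_eq0 => /orP[/eqP->|/eqP->].
- by rewrite oppr0 min_l.
- by rewrite min_r // oppr_ge0.
Qed.

Lemma normalized_weights (R : realFieldType) (m : nat) (mu : 'I_m -> R)
    (w := (1 + \sum_i mu i)^-1) :
  (forall i, 0 <= mu i) ->
  [/\ 0 <= w <= 1, forall i, 0 <= mu i * w <= 1 & w + \sum_i mu i * w = 1].
Proof.
rewrite /w => mu_ge0; have s_ge0 : 0 <= \sum_i mu i by exact: sumr_ge0.
have s1_gt0 : 0 < 1 + \sum_i mu i by rewrite ltr_pwDl.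
split.
- by rewrite invr_ge0 (ltW s1_gt0) invf_le1 // lerDl.
- move=> i; rewrite mulr_ge0 ?invr_ge0 ?(ltW s1_gt0) //= ler_pdivrMr // mul1r.
  by rewrite ler_wpDl // (bigD1 i) //= lerDl sumr_ge0.
- by rewrite -mulr_suml -[w in w + _]mul1r -mulrDl mulfV // gt_eqF.
Qed.

Lemma pos_lin_dep_of_weights (R : realType) (n m : nat) (I : {set 'I_m})
    (a : 'I_m -> R) (v : 'I_m -> 'I_n -> R) (J : 'I_n -> bool) :
  (forall i, 0 <= a i) -> \sum_i a i != 0 -> (forall i, i \notin I -> a i = 0) ->
  (forall j, J j -> \sum_i a i * v i j = 0) -> pos_lin_dep I v J.
Proof.
move=> a_ge0 a_neq0 a_supp a_comb; exists a; split => [i _ //|]; split.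
  have [i _ ai_neq0] : exists2 i, true & a i != 0.
    apply/exists_inP; apply: contraNT a_neq0; rewrite negb_exists_in => /forall_inP a0.
    by apply/eqP/big1 => i _; apply/eqP/negPn/a0.
  by exists i; split => //; apply: contraNT ai_neq0 => /a_supp ->.
move=> j Jj; rewrite -[RHS](a_comb j Jj) [RHS](bigID (mem I)) /=.
by rewrite [X in _ = _ + X]big1 ?addr0 // => i /a_supp ->; rewrite mul0r.
Qed.

Section FilterLimits.
Context {R : realFieldType} {T : Type} {F : set_system T} {FF : Filter F}.

Lemma cvg_sumr (m : nat) (f : 'I_m -> T -> R) (l : 'I_m -> R) :
  (forall i, f i @ F --> l i) -> (fun k => \sum_i f i k) @ F --> \sum_i l i.
Proof. by move=> f_l; apply: cvg_big => [|i _]; [exact: add_continuous|exact: f_l]. Qed.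

Lemma cvg0_inactive_multiplier (c l : T -> R) (cb : R) :
  (fun k => Num.min (- c k) (l k)) @ F --> 0 -> c @ F --> cb -> cb < 0 ->
  l @ F --> 0.
Proof.
move=> min0 c_cb cb_lt0.
have c_far : \forall k \near F, - cb / 2 < - c k.
  by apply: (cvgr_gt (- cb) (cvgN c_cb)); lra.
have min_small : \forall k \near F, `|Num.min (- c k) (l k)| < - cb / 2.
  by apply: (cvgr0_norm_lt _ min0); lra.
(* eventually the min is too small to be - c k, so it is l k *)
apply: cvg_trans min0; apply: near_eq_cvg; apply: filterS2 c_far min_small => k.
move=> c_k min_k; rewrite min_r // leNgt; apply/negP => /ltW/min_l min_c.
by move: min_k; rewrite min_c ltNge (le_trans (ltW c_k) (ler_norm _)).
Qed.

Lemma active_multiplier_cvg (c l : T -> R) (cb : R) :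
  (fun k => Num.min (- c k) (l k)) @ F --> 0 -> c @ F --> cb -> cb <= 0 ->
  (fun k => (if cb == 0 then Num.max (l k) 0 else 0) - l k) @ F --> 0.
Proof.
move=> min0 c_cb; have [_ _|cb_neq0 cb_le0] := eqVneq cb 0.
  have min_norm0 : (fun k => `|Num.min (- c k) (l k)|) @ F --> (0 : R).
    by rewrite -(normr0 R); exact: cvg_norm.
  apply/norm_cvg0P/(squeeze_cvgr _ (cvg_cst 0) min_norm0).
  by apply: nearW => k; rewrite normr_ge0 norm_negpart_le_min.
have l0 : l @ F --> 0.
  by apply: (cvg0_inactive_multiplier min0 c_cb); rewrite lt_neqAle cb_neq0.
have -> : (fun k => (if false then Num.max (l k) 0 else 0) - l k) = (fun k => - l k).
  by apply/funext => k; rewrite sub0r.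
by rewrite -oppr0; exact: cvgN.
Qed.

Lemma residual_perturb_cvg0 (m : nat) (t : T -> R) (l mu : T -> 'I_m -> R)
    (g : 'I_m -> T -> R) (gb : 'I_m -> R) :
  (fun k => t k + \sum_i l k i * g i k) @ F --> 0 ->
  (forall i, (fun k => mu k i - l k i) @ F --> 0) -> (forall i, g i @ F --> gb i) ->
  (fun k => t k + \sum_i mu k i * g i k) @ F --> 0.
Proof.
move=> res0 dmu0 g_gb.
have res_split k : t k + \sum_i mu k i * g i k =
    (t k + \sum_i l k i * g i k) + \sum_i (mu k i - l k i) * g i k.
  rewrite -addrA -big_split; congr (_ + _); apply: eq_bigr => i _.
  by rewrite /= -mulrDl addrC subrK.
have : (fun k => (t k + \sum_i l k i * g i k) + \sum_i (mu k i - l k i) * g i k)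
    @ F --> 0 + \sum_i 0 * gb i.
  exact: cvgD res0 (cvg_sumr (fun i => cvgM (dmu0 i) (g_gb i))).
rewrite big1 ?addr0 => [lim|i _]; last exact: mul0r.
by apply: (cvg_trans _ lim); apply: near_eq_cvg; apply: nearW => k; rewrite res_split.
Qed.

End FilterLimits.

Section NormalizedLimit.
Context {R : realType} {T : Type} {F : set_system T} {FU : UltraFilter F}.

Let cvgr_unique (f : T -> R) (x y : R) : f @ F --> x -> f @ F --> y -> x = y.
Proof. exact: (cvg_unique (@Rhausdorff R)). Qed.

Lemma ultra_normalized_limit (n m : nat) (J : 'I_n -> bool)
    (t : T -> 'I_n -> R) (tb : 'I_n -> R)
    (g : 'I_m -> T -> 'I_n -> R) (gb : 'I_m -> 'I_n -> R) (mu : T -> 'I_m -> R) :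
  (forall j, (fun k => t k j) @ F --> tb j) ->
  (forall i j, (fun k => g i k j) @ F --> gb i j) ->
  (forall k i, 0 <= mu k i) ->
  (forall j, J j -> (fun k => t k j + \sum_i mu k i * g i k j) @ F --> 0) ->
  exists (b : R) (a : 'I_m -> R),
    [/\ 0 <= b, forall i, 0 <= a i, b + \sum_i a i = 1,
        forall i, (\forall k \near F, mu k i = 0) -> a i = 0
      & forall j, J j -> b * tb j + \sum_i a i * gb i j = 0].
Proof.
move=> t_tb g_gb mu_ge0 res0.
pose w k := (1 + \sum_i mu k i)^-1.
have w_bnd k := normalized_weights (mu_ge0 k).
have [b w_b] : exists b : R, w @ F --> b.
  by apply: (ultra_cvg_bounded (a := 0) (b := 1)) => k; case: (w_bnd k).
have muw_bnd i k : 0 <= mu k i * w k <= 1 by case: (w_bnd k) => _ /(_ i).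
have [a muw_a] := choice (fun i => ultra_cvg_bounded (muw_bnd i)).
exists b, a; split.
- apply: (cvgr_to_ge w_b); apply: nearW => k.
  by case: (w_bnd k) => /andP[].
- move=> i; apply: (cvgr_to_ge (muw_a i)); apply: nearW => k.
  by case/andP: (muw_bnd i k).
- apply: cvgr_unique (cvgD w_b (cvg_sumr muw_a)) _.
  apply: (cvg_near_cst (1 : R)); apply: nearW => k.
  by case: (w_bnd k).
- move=> i mu0; apply: cvgr_unique (muw_a i) _; apply: (cvg_near_cst (0 : R)).
  by apply: filterS mu0 => k ->; rewrite mul0r.
move=> j Jj; apply: cvgr_unique
  (cvgD (cvgM w_b (t_tb j)) (cvg_sumr (fun i => cvgM (muw_a i) (g_gb i j)))) _.
rewrite -[X in _ --> X](mulr0 b).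
apply: (cvg_trans _ (cvgM w_b (res0 j Jj))); apply: near_eq_cvg.
apply: nearW => k /=; rewrite mulrDr mulr_sumr; congr (_ + _).
by apply: eq_bigr => i _; rewrite mulrA [w k * _]mulrC.
Qed.

End NormalizedLimit.

Section PlayerKKT.
Variables (R : realType) (X : topologicalType) (n m : nat) (J : 'I_n -> bool).
Variables (t : X -> 'I_n -> R) (g : 'I_m -> X -> 'I_n -> R) (c : 'I_m -> X -> R).

Definition cpld_at (x : X) : Prop :=
  forall I : {set 'I_m}, (forall i, i \in I -> c i x = 0) ->
    pos_lin_dep I (fun i => g i x) J ->
    \forall y \near x, lin_dep I (fun i => g i y) J.

Definition kkt_multiplier_at (x : X) (lam : 'I_m -> R) : Prop :=
  (forall j, J j -> t x j + \sum_i lam i * g i x j = 0) /\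
  (forall i, Num.min (- c i x) (lam i) = 0).

Variable xbar : X.
Hypothesis t_cont : forall j, {for xbar, continuous (fun y => t y j)}.
Hypothesis g_cont : forall i j, {for xbar, continuous (fun y => g i y j)}.
Hypothesis c_le0 : forall i, c i xbar <= 0.
Hypothesis cpld : cpld_at xbar.

Lemma ultra_cpld_kkt (T : Type) (U : set_system T) {U_ultra : UltraFilter U}
    (xs : T -> X) (mu : T -> 'I_m -> R) :
  xs @ U --> xbar ->
  (forall k i, 0 <= mu k i) -> (forall k i, c i xbar != 0 -> mu k i = 0) ->
  (forall j, J j -> (fun k => t (xs k) j + \sum_i mu k i * g i (xs k) j) @ U --> 0) ->
  exists lam, kkt_multiplier_at xbar lam.
Proof.
move=> xs_xbar mu_ge0 mu_inactive mu_res0.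
have at_xs (h : X -> R) : {for xbar, continuous h} -> (fun k => h (xs k)) @ U --> h xbar.
  by move=> h_cont; exact: continuous_cvg h_cont xs_xbar.
pose A : {set 'I_m} := [set i | c i xbar == 0]%SET.
have mu_supp k i : i \notin A -> mu k i = 0 by rewrite inE => /mu_inactive.
have [I_ red_I] := choice (fun k =>
  caratheodory_reduction J (fun i j => g i (xs k) j) (mu_ge0 k) (mu_supp k)).
have [nu red] := choice red_I.
have [I I_eq] := ultra_near_const (F := U) I_.
have nu_ge0 k i : 0 <= nu k i by case: (red k) => _ ->.
have nu_res0 j : J j -> (fun k => t (xs k) j + \sum_i nu k i * g i (xs k) j) @ U --> 0.
  move=> Jj; apply: (cvg_trans _ (mu_res0 j Jj)); apply: near_eq_cvg.
  by apply: nearW => k /=; case: (red k) => _ _ _ ->.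
have [b [a [b_ge0 a_ge0 ab1 a_supp ab_comb]]] := ultra_normalized_limit
  (fun j => at_xs _ (@t_cont j)) (fun i j => at_xs _ (@g_cont i j)) nu_ge0 nu_res0.
have a_out i : i \notin I -> a i = 0.
  move=> iNI; apply: a_supp; apply: filterS I_eq => k Ik.
  by case: (red k) => _ _ nu_supp _ _; rewrite nu_supp // Ik.
have I_active i : i \in I -> c i xbar = 0.
  have [k Ik] := filter_ex I_eq; case: (red k) => /fintype.subsetP sub _ _ _ _ iI.
  by move: (sub i); rewrite Ik /A inE => /(_ iI)/eqP.
have b_neq0 : b != 0.
  apply/eqP => b0; move: ab1 ab_comb; rewrite b0 add0r => a1 a_comb.
  have pld : pos_lin_dep I (fun i => g i xbar) J.
    apply: (pos_lin_dep_of_weights a_ge0 _ a_out) => [|j Jj]; first by rewrite a1 oner_neq0.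
    by rewrite -[RHS](a_comb j Jj) mul0r add0r.
  have near_dep : \forall k \near U, lin_dep I (fun i => g i (xs k)) J.
    exact: xs_xbar (cpld I_active pld).
  have [k [dep Ik]] := filter_ex (filterI near_dep I_eq).
  by case: (red k) => _ _ _ _ []; rewrite Ik.
exists (fun i => a i / b); split.
- move=> j Jj; apply: (mulfI b_neq0); rewrite mulr0 -[RHS](ab_comb j Jj) mulrDr mulr_sumr.
  by congr (_ + _); apply: eq_bigr => i _; rewrite mulrA mulrCA divff // mulr1.
- move=> i; apply: min_opp_eq0 (c_le0 i) (divr_ge0 (a_ge0 i) b_ge0) _.
  by have [/I_active ->|/a_out ->] := boolP (i \in I); rewrite ?mul0r ?mulr0.
Qed.

Lemma cpld_player_kkt (xs : nat -> X) (lams : nat -> 'I_m -> R) :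
  (forall i, {for xbar, continuous (c i)}) ->
  xs @ \oo --> xbar ->
  (forall j, J j -> (fun k => t (xs k) j + \sum_i lams k i * g i (xs k) j) @ \oo --> 0) ->
  (forall i, (fun k => Num.min (- c i (xs k)) (lams k i)) @ \oo --> 0) ->
  exists lam, kkt_multiplier_at xbar lam.
Proof.
move=> c_cont xs_xbar res0 min0.
have [U [U_ultra oo_U]] := @ultraFilterLemma nat \oo _.
have along_U (f : nat -> R) (y : R) : f @ \oo --> y -> f @ U --> y.
  by move=> f_y B /f_y /oo_U.
have xs_U : xs @ U --> xbar by move=> B /xs_xbar /oo_U.
pose mu k i := if c i xbar == 0 then Num.max (lams k i) 0 else 0.
apply: (@ultra_cpld_kkt _ U _ xs mu xs_U).
- by move=> k i; rewrite /mu; case: ifP; rewrite // le_max lexx orbT.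
- by move=> k i /negbTE; rewrite /mu => ->.
move=> j Jj; apply: (residual_perturb_cvg0 (gb := fun i => g i xbar j) (along_U _ _ (res0 j Jj))).
- move=> i; apply: active_multiplier_cvg (along_U _ _ (min0 i)) _ (c_le0 i).
  exact: continuous_cvg (c_cont i) xs_U.
- by move=> i; exact: continuous_cvg (@g_cont i j) xs_U.
Qed.

End PlayerKKT.

Lemma C1_continuous (R : realType) (n : nat) (f : 'rV[R]_n -> R) :
  C1 f -> continuous f.
Proof. by move=> [f_diff _] x; exact: differentiable_continuous. Qed.

Lemma C1_pderiv_continuous (R : realType) (n : nat) (f : 'rV[R]_n -> R) (j : 'I_n) :
  C1 f -> continuous (fun x => pderiv f x j).
Proof. by move=> [_ df_cont]; exact: df_cont. Qed.

Theorem theorem2p6 (R : realType) (n N : nat) (owner : 'I_n -> 'I_N)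
  (r : 'I_N -> nat) (theta : 'I_N -> 'rV[R]_n -> R)
  (c : forall nu : 'I_N, 'I_(r nu) -> 'rV[R]_n -> R)
  (xs : nat -> 'rV[R]_n) (xbar : 'rV[R]_n)
  (lams : forall nu : 'I_N, nat -> 'I_(r nu) -> R) :
  (forall nu, C1 (theta nu)) ->
  (forall nu i, C1 (c nu i)) ->
  xs @ \oo --> xbar ->
  (forall nu (j : 'I_n), owner j = nu ->
     (fun k => pderiv (theta nu) (xs k) j
               + \sum_(i < r nu) lams nu k i * pderiv (c nu i) (xs k) j)
       @ \oo --> (0 : R)) ->
  (forall nu (i : 'I_(r nu)),
     (fun k => Num.min (- c nu i (xs k)) (lams nu k i)) @ \oo --> (0 : R)) ->
  GNEP_CPLD owner c xbar ->
  exists lambar : forall nu : 'I_N, 'I_(r nu) -> R,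
    KKT_point owner theta c xbar lambar.
Proof.
move=> theta_C1 c_C1 xs_xbar res0 min0 cpld.
have player_kkt nu : exists lam : 'I_(r nu) -> R,
    (forall j, owner j = nu ->
       pderiv (theta nu) xbar j + \sum_(i < r nu) lam i * pderiv (c nu i) xbar j = 0) /\
    (forall i, Num.min (- c nu i xbar) (lam i) = 0).
  have [c_le0 cpld_nu] := cpld nu.
  have [lam [stat compl]] := cpld_player_kkt
    (fun j => C1_pderiv_continuous (j := j) (x := xbar) (theta_C1 nu))
    (fun i j => C1_pderiv_continuous (j := j) (x := xbar) (c_C1 nu i))
    c_le0 cpld_nu (fun i => C1_continuous (x := xbar) (c_C1 nu i)) xs_xbar
    (fun j Jj => res0 nu j (eqP Jj)) (min0 nu).
  by exists lam; split => // j /eqP; exact: stat.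
by exists (fun nu => sval (cid (player_kkt nu))) => nu; exact: svalP (cid (player_kkt nu)).
Qed.
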